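(* If $\Sigma$ is a finite ''CM$_{\mathbf Z}$'' simplicial homology$_{\mathbf Z}$ $n$-manifold, then $\Sigma$ is orientable$_{\mathbf Z}$.
   Context: Simplicial complexes contain the empty simplex $\emptyset$ (dim $-1$) when nonempty. $\mathrm{cost}_\Sigma\sigma=\{\tau\in\Sigma:\sigma\not\subset\tau\}$. Augmental homology: reduced simplicial homology with $\emptyset$ in degree $-1$; relative homology ordinary for a nonempty subcomplex and reduced for the subcomplex $\emptyset$. Simplicial homology$_{\mathbf Z}$ $n$-manifold ($n=\dim\Sigma$): $\bullet\bullet$ (two vertices, no edge), $\{\emptyset\}$, or $|\Sigma|$ connected, locally compact, with $H_i(|\Sigma|,|\Sigma|\setminus\{x\};\mathbf Z)=0$ for $i\ne n$, $\cong0$ or $\mathbf Z$ for $i=n$, for all $x$, and $\cong\mathbf Z$ for some $x$. $\mathrm{Bd}_{\mathbf Z}\Sigma=\{\sigma:\mathbf H_n(\Sigma,\mathrm{cost}_\Sigma\sigma;\mathbf Z)=0\}$; finite $\Sigma$ is orientable$_{\mathbf Z}$ if $\mathbf H_n(\Sigma,\mathrm{Bd}_{\mathbf Z}\Sigma;\mathbf Z)\cong\mathbf Z$. ''CM$_{\mathbf Z}$'' for a complex of dimension $m$: $H_i(|\Sigma|,|\Sigma|\setminus\{x\};\mathbf Z)=0$ for all $i\ne m$ and all $x\in|\Sigma|$, reduced $\mathbf H_i(\Sigma;\mathbf Z)=0$ for $i\ne m$, and some local group in degree $m$ has $\mathbf Z$ as a direct summand. *)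

From HB Require Import structures.
From mathcomp Require Import all_boot all_order all_algebra.
Set Implicit Arguments. Unset Strict Implicit. Unset Printing Implicit Defensive.
Import Order.TTheory GRing.Theory Num.Theory.
Local Open Scope ring_scope.

Section Simplicial.
Variable V : finType.

(* A finite simplicial complex on the vertex type V: a down-closed family of
   finite vertex sets.  If nonempty it contains the empty simplex set0
   (dimension -1).  A face s has dimension #|s| - 1. *)
Definition is_complex (S : {set {set V}}) : Prop :=
  forall s t : {set V}, s \in S -> t \subset s -> t \in S.

(* dimS S = (dim S) + 1 = largest cardinality of a face. *)
Definition dimS (S : {set {set V}}) : nat := (\max_(s in S) #|s|)%N.

Definition cost (S : {set {set V}}) (sg : {set V}) : {set {set V}} :=
  [set t in S | ~~ (sg \subset t)].

Definition chain := {ffun {set V} -> int}.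

(* oriented incidence number [s : t]; simplices oriented by the enumeration
   order of V; the sign of deleting v is (-1)^(number of vertices of s below v) *)
Definition incid (s t : {set V}) : int :=
  \sum_(v in s | t == s :\ v)
     (-1) ^+ #|[set u in s | (enum_rank u < enum_rank v)%N]|.

(* simplicial boundary; the boundary of a vertex is the empty simplex
   (augmentation), so homology is augmental (reduced) homology *)
Definition bdry (c : chain) : chain :=
  [ffun t => \sum_(s : {set V}) c s * incid s t].

(* relative chains of C_k(S, G), with k = cardinality = degree + 1 *)
Definition supported (S G : {set {set V}}) (k : nat) (c : chain) : Prop :=
  forall s, c s != 0 -> [&& s \in S, s \notin G & #|s| == k].

Definition rcycle (S G : {set {set V}}) (k : nat) (c : chain) : Prop :=
  supported S G k c /\ forall t, t \in S -> t \notin G -> bdry c t = 0.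

Definition rbound (S G : {set {set V}}) (k : nat) (c : chain) : Prop :=
  supported S G k c /\
  exists d, supported S G k.+1 d /\
    forall s, s \in S -> s \notin G -> c s = bdry d s.

Definition chain_add (c d : chain) : chain := [ffun s => c s + d s].
Definition chain_sub_mul (c : chain) (m : int) (z : chain) : chain :=
  [ffun s => c s - m * z s].
Definition chain_mul (m : int) (z : chain) : chain := [ffun s => m * z s].

(* H_{k-1}(S, G; Z) = 0 *)
Definition Hzero (S G : {set {set V}}) (k : nat) : Prop :=
  forall c, rcycle S G k c -> rbound S G k c.

(* H_{k-1}(S, G; Z) is isomorphic to Z (infinite cyclic, generated by [z]) *)
Definition HisZ (S G : {set {set V}}) (k : nat) : Prop :=
  exists z, rcycle S G k z /\
    (forall c, rcycle S G k c -> exists m : int, rbound S G k (chain_sub_mul c m z)) /\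
    (forall m : int, rbound S G k (chain_mul m z) -> m = 0).

(* Z is a direct summand of H_{k-1}(S, G; Z), i.e. there is a surjective
   homomorphism H_{k-1}(S,G;Z) -> Z (which splits since Z is free) *)
Definition HZsummand (S G : {set {set V}}) (k : nat) : Prop :=
  exists (z : chain) (phi : chain -> int),
    rcycle S G k z /\ phi z = 1 /\
    (forall c d, rcycle S G k c -> rcycle S G k d ->
       phi (chain_add c d) = phi c + phi d) /\
    (forall b, rbound S G k b -> phi b = 0).

Definition connected_cx (S : {set {set V}}) : Prop :=
  (exists v, [set v] \in S) /\
  forall u v, [set u] \in S -> [set v] \in S ->
    connect (fun a b => [set a; b] \in S) u v.

(* simplicial homology_Z n-manifold, n = dim S; the point x of |S| ranges over
   relative interiors of nonempty faces s, and
   H_i(|S|, |S| \ x; Z) = H_i(S, cost_S s; Z). *)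
Definition hmanifold (S : {set {set V}}) : Prop :=
  is_complex S /\
  [\/ exists a b : V, a != b /\ S = [set set0; [set a]; [set b]],
      S = [set set0]
    | connected_cx S /\
      (forall s, s \in S -> s != set0 ->
         (forall k, k != dimS S -> Hzero S (cost S s) k) /\
         (Hzero S (cost S s) (dimS S) \/ HisZ S (cost S s) (dimS S))) /\
      (exists s, [/\ s \in S, s != set0 & HisZ S (cost S s) (dimS S)])].

Definition CM_Z (S : {set {set V}}) : Prop :=
  (forall s, s \in S -> s != set0 -> forall k, k != dimS S -> Hzero S (cost S s) k) /\
  (forall k, k != dimS S -> Hzero S set0 k) /\
  (exists s, [/\ s \in S, s != set0 & HZsummand S (cost S s) (dimS S)]).

Definition is_Bd (S B : {set {set V}}) : Prop :=
  forall s, s \in B <-> (s \in S /\ Hzero S (cost S s) (dimS S)).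

Definition orientable_Z (S : {set {set V}}) : Prop :=
  exists B, is_Bd S B /\ HisZ S B (dimS S).

End Simplicial.

(** Relative chains of (S, cost_S s) live on the star of s, so the CM hypothesis says
    that every link of S is acyclic below its top degree.  Hence every face lies in a
    facet, and the manifold condition forces every ridge into at most two facets; the
    boundary ridges are those lying in a single facet, so H_n(S, Bd S) is the group of
    top chains with no flux through interior ridges.

    By downward induction on the face s, the chains on the star of s with no flux
    through interior ridges form an infinite cyclic group generated by a chain with
    coefficients +-1.  Facets and ridges are immediate.  In codimension 2 the link is a
    connected graph of degree at most 2: halving the flux of the all-ones chain and
    bounding it in the link gives a consistent chain with odd coefficients.  In
    codimension >= 3 the generators on the stars of two adjacent link vertices agree or
    disagree on the star of their edge; this sign is a Z/2 1-cocycle on the link, which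
    is a coboundary because H_1 and H_2 of the link vanish, so the generators can be
    flipped to glue.  Uniqueness up to a scalar comes from the connectivity of links.
    The case s = set0 is the theorem. *)

From mathcomp Require Import all_boot all_order all_algebra.
From mathcomp Require Import zify ring.
From Stdlib Require Import ClassicalEpsilon.
Set Implicit Arguments. Unset Strict Implicit. Unset Printing Implicit Defensive.
Import Order.TTheory GRing.Theory Num.Theory.
Local Open Scope ring_scope.

Definition asbool (P : Prop) : bool := if excluded_middle_informative P then true else false.

Lemma asboolP (P : Prop) : reflect P (asbool P).
Proof. by rewrite /asbool; case: excluded_middle_informative => h; constructor. Qed.

Lemma sign_sqr k : (-1 : int) ^+ k * (-1) ^+ k = 1.
Proof. by rewrite -exprD addnn -signr_odd odd_double. Qed.

Lemma sqr1_cases (z : int) : z * z = 1 -> z = 1 \/ z = -1.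
Proof.
by move=> h; have := sqrf_eq1 z; rewrite expr2 h eqxx => /esym/orP[]/eqP; [left|right].
Qed.

Lemma sum_indicator (T : finType) (a : T) (F : T -> int) :
  \sum_x (x == a)%:Z * F x = F a.
Proof.
by rewrite (bigD1 a) //= eqxx mul1r big1 ?addr0 // => x /negbTE ->; rewrite mul0r.
Qed.

Lemma sum_indicator_in (R : pzSemiRingType) (T : finType) (A : {pred T}) a (F : T -> R) :
  a \in A -> \sum_(x in A) (x == a)%:R * F x = F a.
Proof.
move=> aA; rewrite (bigD1 a) //= eqxx mul1r big1 ?addr0 // => x /andP[_ /negbTE ->].
by rewrite mul0r.
Qed.

Lemma fin_choice_on (T : finType) (U : Type) (u0 : U) (D : T -> Prop) (P : T -> U -> Prop) :
  (forall x, D x -> exists u, P x u) -> exists f : T -> U, forall x, D x -> P x (f x).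
Proof.
move=> H; have [|f fP] := @fin_all_exists T (fun _ => U) (fun x u => D x -> P x u).
  by move=> x; case: (classic (D x)) => [/H [u Pu]|nD]; [exists u | exists u0].
by exists f.
Qed.

Lemma sum_neq0 (I : finType) (P : pred I) (F : I -> int) :
  \sum_(i | P i) F i != 0 -> exists2 i, P i & F i != 0.
Proof.
move=> H; case: (pickP [pred i | P i && (F i != 0)]) => [i /andP[]|none].
  by exists i.
move/eqP: H; case; apply: big1 => i Pi; move: (none i) => /=.
by rewrite Pi /= => /negbFE/eqP.
Qed.

Lemma sum_off_diagonal (T : finType) (M : nmodType) (A : {set T}) (F : T -> M) :
  \sum_(v in A) \sum_(u in A :\ v) F u = (\sum_(u in A) F u) *+ #|A|.-1.
Proof.
rewrite (exchange_big_dep (mem A)) /=; last by move=> v u _; rewrite inE => /andP[].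
rewrite -sumrMnl; apply: eq_bigr => u uA.
rewrite (eq_bigl (fun v => v \in A :\ u)) => [|v]; last by rewrite !inE uA andbT eq_sym andbC.
by rewrite sumr_const (cardsD1 u A) uA.
Qed.

Definition sign_bit (z : int) : 'Z_2 := (z != 1)%:R.
Definition bit_sign (x : 'Z_2) : int := if x == 0 then 1 else -1.

Lemma Z2_cases (x : 'Z_2) : x = 0 \/ x = 1.
Proof. by case: x => [[|[|n]] //= H]; [left|right]; apply/val_inj. Qed.

Lemma Z2_oppr (x : 'Z_2) : - x = x.
Proof. by case: (Z2_cases x) => ->; apply/val_inj. Qed.

Lemma Z2_mulrn2 (x : 'Z_2) : x *+ 2 = 0.
Proof. by case: (Z2_cases x) => ->; apply/val_inj. Qed.

Lemma Z2_sign k : (((-1 : int) ^+ k)%:~R : 'Z_2) = 1.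
Proof. by rewrite rmorphXn /= (_ : (-1)%:~R = 1) ?expr1n //; apply/val_inj. Qed.

Lemma Z2_sqr1 (z : int) : z * z = 1 -> (z%:~R : 'Z_2) = 1.
Proof. by case/sqr1_cases => ->; [rewrite rmorph1 | exact: (Z2_sign 1)]. Qed.

Lemma sign_bitM x y : x * x = 1 -> y * y = 1 ->
  sign_bit (x * y) = sign_bit x + sign_bit y.
Proof. by move=> /sqr1_cases [] -> /sqr1_cases [] ->; apply/val_inj. Qed.

Lemma bit_signD x y : bit_sign (x + y) = bit_sign x * bit_sign y.
Proof. by case: (Z2_cases x) => ->; case: (Z2_cases y) => ->. Qed.

Lemma sign_bitK z : z * z = 1 -> bit_sign (sign_bit z) = z.
Proof. by move=> /sqr1_cases [] ->. Qed.

Lemma bit_sign_sqr x : bit_sign x * bit_sign x = 1.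
Proof. by case: (Z2_cases x) => ->. Qed.

Lemma signs_transpose (x y p q : int) :
  x * x = 1 -> y * y = 1 -> p * p = 1 -> q * q = 1 -> x * y = p * q -> x * p = y * q.
Proof. by move=> /sqr1_cases [] -> /sqr1_cases [] -> /sqr1_cases [] -> /sqr1_cases [] ->. Qed.

Section Incidence.
Variable V : finType.
Implicit Types (s t x : {set V}) (a b v : V).

Lemma cover_setU1 s x : s \subset x -> #|x| = #|s|.+1 ->
  exists2 a, a \notin s & x = a |: s.
Proof.
move=> sx cx.
have : #|x :\: s| == 1%N by rewrite cardsD (setIidPr sx) cx -addn1 addKn.
case/cards1P => a E.
have : a \in x :\: s by rewrite E !inE.
rewrite !inE => /andP[as_ ax]; exists a => //.
apply/setP => u; rewrite !inE.
case: (boolP (u \in s)) => us; first by rewrite !orbT (subsetP sx).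
have : (u \in x :\: s) = (u \in x) by rewrite !inE us.
by rewrite E !inE orbF => <-.
Qed.

Lemma cover2_setU2 s x : s \subset x -> #|x| = #|s|.+2 ->
  exists a b, [/\ a \notin s, b \notin s, a != b & x = a |: (b |: s)].
Proof.
move=> sx cx.
have [b bs xE] : exists2 b, b \notin s & b |: s \subset x.
  have : (0 < #|x :\: s|)%N by rewrite cardsD (setIidPr sx) cx subn_gt0.
  case/card_gt0P => b; rewrite inE => /andP[bs bx].
  by exists b; rewrite // subUset sub1set bx.
have [|a abs ->] := cover_setU1 xE; first by rewrite cx cardsU1 bs.
by exists a, b; move: abs; rewrite !inE negb_or => /andP[/negPf ab ->]; rewrite ab.
Qed.

Lemma setU1_eq a b s : a \notin s -> b \notin s -> (a |: s == b |: s) = (a == b).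
Proof.
move=> as_ bs; apply/eqP/eqP => [E|->] //.
have : a \in b |: s by rewrite -E setU11.
by rewrite !inE (negbTE as_) orbF => /eqP.
Qed.

Lemma setU2D1l a b s : a \notin s -> a != b -> (a |: (b |: s)) :\ a = b |: s.
Proof. by move=> as_ ab; rewrite setU1K // !inE negb_or ab. Qed.

Lemma setU2D1r a b s : b \notin s -> a != b -> (a |: (b |: s)) :\ b = a |: s.
Proof. by move=> bs ab; rewrite setUCA setU1K // !inE negb_or eq_sym ab. Qed.

Lemma setU2_diff a b s : a \notin s -> b \notin s -> (a |: (b |: s)) :\: s = [set a; b].
Proof.
move=> as_ bs; apply/setP => u; rewrite !inE.
case: (eqVneq u a) => [->|ua]; first by rewrite as_.
by case: (eqVneq u b) => [->|ub]; rewrite ?bs //=; case: (u \in s).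
Qed.

Lemma proper_setU1 s v : v \notin s -> s \proper v |: s.
Proof.
move=> vs; rewrite properEneq subsetUr andbT.
by apply: contraNneq vs => ->; rewrite setU11.
Qed.

Lemma incidD1 x v : v \in x ->
  incid x (x :\ v) = (-1) ^+ #|[set u in x | (enum_rank u < enum_rank v)%N]|.
Proof.
move=> vx; rewrite /incid (bigD1 v) /=; last by rewrite vx eqxx.
rewrite big1 ?addr0 // => u /andP[/andP[ux /eqP e] uv].
have : v \in x :\ u by rewrite !inE eq_sym uv vx.
by rewrite -e !inE eqxx.
Qed.

Lemma incid_neq0 x t : incid x t != 0 -> exists2 v, v \in x & t = x :\ v.
Proof.
case: (pickP [pred v | (v \in x) && (t == x :\ v)]) => [v /andP[vx /eqP ->] _| none].
  by exists v.
by rewrite /incid big_pred0 ?eqxx.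
Qed.

Lemma incid_neq0_cover x t : incid x t != 0 -> t \subset x /\ #|t| = (#|x|).-1.
Proof.
case/incid_neq0 => v vx ->; split; first exact: subD1set.
by rewrite (cardsD1 v x) vx.
Qed.

Lemma incid_mod2 x t : ((incid x t)%:~R : 'Z_2) = \sum_(v in x | t == x :\ v) 1.
Proof. by rewrite /incid rmorph_sum; apply: eq_bigr => v _; exact: Z2_sign. Qed.

Lemma card_sepU1 (P : pred V) a s : a \notin s ->
  #|[set u in a |: s | P u]| = (P a + #|[set u in s | P u]|)%N.
Proof.
move=> as_.
have -> : [set u in a |: s | P u] =
          (if P a then a |: [set u in s | P u] else [set u in s | P u]).
  apply/setP => u; case Pa: (P a); rewrite !inE; case: eqP => [->|_] //=;
  by rewrite ?Pa ?(negbTE as_).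
by case: (P a); rewrite // cardsU1 inE (negbTE as_).
Qed.

Lemma incid_setU1 a s : a \notin s ->
  incid (a |: s) s = (-1) ^+ #|[set u in s | (enum_rank u < enum_rank a)%N]|.
Proof. by move=> as_; rewrite -{2}(setU1K as_) incidD1 ?setU11 // card_sepU1 //= ltnn. Qed.

Lemma incid_cover_sqr s x : s \subset x -> #|x| = #|s|.+1 -> incid x s * incid x s = 1.
Proof. by move=> sx cx; have [a as_ ->] := cover_setU1 sx cx; rewrite incid_setU1 // sign_sqr. Qed.

Lemma incid_setU2_neq0 a b s t : a \notin s -> b \notin s -> a != b -> s \subset t ->
  incid (a |: (b |: s)) t != 0 -> t = a |: s \/ t = b |: s.
Proof.
move=> as_ bs ab st /incid_neq0 [x xe tE].
move: xe; rewrite !inE => /or3P[/eqP xa|/eqP xb|xs].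
- by right; rewrite tE xa setU2D1l.
- by left; rewrite tE xb setU2D1r.
- by move: (subsetP st x xs); rewrite tE !inE eqxx.
Qed.

(* The local form of d o d = 0. *)
Lemma incid_diamond a b s : a \notin s -> b \notin s -> a != b ->
  incid (a |: (b |: s)) (a |: s) * incid (a |: s) s +
  incid (a |: (b |: s)) (b |: s) * incid (b |: s) s = 0.
Proof.
move=> as_ bs ab.
set x := a |: (b |: s).
rewrite -[in incid x (a |: s)](setU2D1r bs ab) -[in incid x (b |: s)](setU2D1l as_ ab).
rewrite !incidD1 ?inE ?eqxx ?orbT // !incid_setU1 //.
have abs : a \notin b |: s by rewrite !inE negb_or as_ andbT.
rewrite !(card_sepU1 _ abs) !(card_sepU1 _ bs) /= !ltnn /= !add0n.
case: (ltngtP (enum_rank a) (enum_rank b)) => h; rewrite /= ?exprD ?expr1 ?expr0.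
- by ring.
- by ring.
- by move/val_inj/enum_rank_inj: h => h; rewrite h eqxx in ab.
Qed.

End Incidence.

Section Complex.
Variables (V : finType) (S : {set {set V}}).
Hypotheses (HS : is_complex S) (HN : (0 < dimS S)%N).
Local Notation N := (dimS S).
Implicit Types (s t r x y f e : {set V}) (a b v : V).

Lemma card_le_dim s : s \in S -> (#|s| <= N)%N.
Proof. by move=> sS; apply: (@leq_bigmax_cond _ (fun s => s \in S)). Qed.

Lemma in_cost s t : (t \in cost S s) = (t \in S) && ~~ (s \subset t).
Proof. by rewrite /cost inE. Qed.

Lemma notin_cost s t : s \subset t -> t \notin cost S s.
Proof. by move=> st; rewrite in_cost st andbF. Qed.

Lemma supported_cost s k (c : chain V) t : supported S (cost S s) k c -> c t != 0 ->
  [/\ t \in S, s \subset t & #|t| = k].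
Proof. by move=> cs /cs /and3P[tS]; rewrite in_cost tS negbK => st /eqP. Qed.

Lemma bdry_notin (d : chain V) t : (forall x, d x != 0 -> x \in S) -> t \notin S ->
  bdry d t = 0.
Proof.
move=> dS tS; rewrite /bdry ffunE big1 // => x _.
case: (eqVneq (d x) 0) => [->|dx]; first by rewrite mul0r.
case: (eqVneq (incid x t) 0) => [->|ix]; first by rewrite mulr0.
have [tx _] := incid_neq0_cover ix.
by rewrite (HS (dS x dx) tx) in tS.
Qed.

Lemma rbound_eq0 G k (c : chain V) : (forall x, c x = 0) -> rbound S G k c.
Proof.
move=> c0; split; first by move=> x; rewrite c0 eqxx.
exists [ffun _ => 0]; split; first by move=> x; rewrite ffunE eqxx.
by move=> x _ _; rewrite c0 /bdry ffunE big1 // => T _; rewrite ffunE mul0r.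
Qed.

(* There are no chains above the top dimension. *)
Lemma rbound_dim G (c : chain V) x : rbound S G N c -> x \in S -> x \notin G -> c x = 0.
Proof.
move=> [_ [d [ds dE]]] xS xG; rewrite dE // /bdry ffunE big1 // => T _.
case: (eqVneq (d T) 0) => [->|/ds/and3P[TS _ /eqP cT]]; first by rewrite mul0r.
by have := card_le_dim TS; rewrite cT ltnn.
Qed.

Definition bounds G k (d c : chain V) :=
  supported S G k d /\ forall t, t \in S -> t \notin G -> c t = bdry d t.

Definition unit_chain s : chain V := [ffun t => (t == s)%:Z].

Lemma unit_chain_rcycle s : s \in S -> rcycle S (cost S s) #|s| (unit_chain s).
Proof.
move=> sS; split=> [t|t tS tc].
  by rewrite ffunE; case: (eqVneq t s) => [-> _|//]; rewrite sS notin_cost /=.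
rewrite /bdry ffunE (bigD1 s) //= big1 ?ffunE ?eqxx ?mul1r ?addr0; last first.
  by move=> x xs; rewrite ffunE (negbTE xs) mul0r.
apply/eqP; apply: contraT => /incid_neq0 [v vs et].
by move: tc; rewrite in_cost tS negbK => /subsetP/(_ v vs); rewrite et !inE eqxx.
Qed.

Definition dipole s x y : chain V :=
  [ffun t => (t == x)%:Z * incid x s - (t == y)%:Z * incid y s].

Lemma dipole_rcycle s x y : x \in S -> y \in S -> s \subset x -> s \subset y ->
  #|x| = #|s|.+1 -> #|y| = #|s|.+1 -> rcycle S (cost S s) #|s|.+1 (dipole s x y).
Proof.
move=> xS yS sx sy cx cy; split=> [t|t tS].
  rewrite ffunE; case: (eqVneq t x) => [-> _|_]; first by rewrite xS notin_cost //= cx.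
  case: (eqVneq t y) => [-> _|_]; first by rewrite yS notin_cost //= cy.
  by rewrite !mul0r subrr eqxx.
rewrite in_cost tS negbK /= => st; rewrite /bdry ffunE.
under eq_bigr => z _ do rewrite ffunE mulrBl -!mulrA.
rewrite sumrB !sum_indicator.
case: (eqVneq t s) => [->|ts]; first by rewrite !incid_cover_sqr // subrr.
have only (z : {set V}) : #|z| = #|s|.+1 -> incid z t = 0.
  move=> cz; apply/eqP; apply: contraNT ts => /incid_neq0_cover[tz ct].
  by rewrite eq_sym eqEcard st ct cz /=.
by rewrite !only // !mulr0 subrr.
Qed.

Definition facets r := [set f in S | (#|f| == N) && (r \subset f)].

Lemma in_facets r f : (f \in facets r) = [&& f \in S, #|f| == N & r \subset f].
Proof. by rewrite inE. Qed.

Lemma facets_in r f : f \in facets r -> f \in S.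
Proof. by rewrite in_facets => /and3P[]. Qed.

Lemma facets_card r f : f \in facets r -> #|f| = N.
Proof. by rewrite in_facets => /and3P[_ /eqP]. Qed.

Lemma facets_sub r f : f \in facets r -> r \subset f.
Proof. by rewrite in_facets => /and3P[]. Qed.

Lemma facets_face r f : f \in facets r -> r \in S.
Proof. by move=> fF; apply: HS (facets_in fF) (facets_sub fF). Qed.

Lemma facets_mono r t f : r \subset t -> f \in facets t -> f \in facets r.
Proof. by move=> rt; rewrite !in_facets => /and3P[-> -> /(subset_trans rt) ->]. Qed.

Lemma exists_link_facet s f : f \in facets s -> (#|s| < N)%N ->
  exists2 v, v \notin s & f \in facets (v |: s).
Proof.
move=> fF lt.
have : (0 < #|f :\: s|)%N by rewrite cardsD (setIidPr (facets_sub fF)) (facets_card fF) subn_gt0.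
case/card_gt0P => v; rewrite !inE => /andP[vs vf].
exists v => //; rewrite in_facets (facets_in fF) (facets_card fF) eqxx /=.
by rewrite subUset sub1set vf (facets_sub fF).
Qed.

Lemma incid_facet_ridge_sqr r f : #|r| = N.-1 -> f \in facets r -> incid f r * incid f r = 1.
Proof.
by move=> cr fF; apply: incid_cover_sqr (facets_sub fF) _; rewrite (facets_card fF) cr prednK.
Qed.

Lemma dipole_facets_rcycle r g h : #|r| = N.-1 -> g \in facets r -> h \in facets r ->
  rcycle S (cost S r) N (dipole r g h).
Proof.
move=> cr gF hF; have cN : N = #|r|.+1 by rewrite cr prednK.
have cU f : f \in facets r -> #|f| = #|r|.+1 by move=> fF; rewrite (facets_card fF) cN.
rewrite cN; exact: dipole_rcycle (facets_in gF) (facets_in hF) (facets_sub gF)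
                                 (facets_sub hF) (cU _ gF) (cU _ hF).
Qed.

Lemma facet_not_Hzero f : f \in S -> #|f| = N -> ~ Hzero S (cost S f) N.
Proof.
move=> fS cf; rewrite -cf => H.
have := H _ (unit_chain_rcycle fS); rewrite cf => /rbound_dim /(_ fS (notin_cost (subxx f))).
by rewrite ffunE eqxx.
Qed.

Lemma two_facets_not_Hzero r f1 f2 : r \in S -> #|r| = N.-1 ->
  f1 \in facets r -> f2 \in facets r -> f1 != f2 -> ~ Hzero S (cost S r) N.
Proof.
move=> rS cr f1F f2F ne /(_ _ (dipole_facets_rcycle cr f1F f2F)) /rbound_dim.
move/(_ _ (facets_in f1F) (notin_cost (facets_sub f1F))).
rewrite ffunE eqxx (negbTE ne) mul1r mul0r subr0 => i0.
by have := incid_facet_ridge_sqr cr f1F; rewrite i0 mul0r.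
Qed.

Lemma three_facets_not_HisZ r f1 f2 f3 : r \in S -> #|r| = N.-1 ->
  f1 \in facets r -> f2 \in facets r -> f3 \in facets r ->
  f1 != f2 -> f1 != f3 -> f2 != f3 -> ~ HisZ S (cost S r) N.
Proof.
move=> rS cr f1F f2F f3F n12 n13 n23 [z [_ [zall _]]].
have i0 f : f \in facets r -> incid f r != 0.
  by move=> fF; apply: contra_eq_neq (incid_facet_ridge_sqr cr fF) => ->; rewrite mul0r.
have coef g h : g \in facets r -> h \in facets r ->
    exists m, forall f, f \in facets r -> dipole r g h f = m * z f.
  move=> gF hF; have [m /rbound_dim hm] := zall _ (dipole_facets_rcycle cr gF hF).
  exists m => f fF; apply/eqP; rewrite -subr_eq0.
  by have := hm _ (facets_in fF) (notin_cost (facets_sub fF)); rewrite ffunE => ->.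
have [m1 E1] := coef _ _ f1F f2F; have [m2 E2] := coef _ _ f1F f3F.
move: (E1 _ f1F) (E1 _ f3F) (E2 _ f3F); rewrite !ffunE !eqxx (negbTE n12).
rewrite eq_sym (negbTE n13) eq_sym (negbTE n23) /= !mul1r !mul0r subrr sub0r subr0.
move=> i1 /esym/eqP; rewrite mulf_eq0 => /orP[/eqP m0|/eqP z3 i3].
  by move/eqP: (i0 _ f1F); rewrite i1 m0 mul0r.
by move: (i0 _ f3F); rewrite -oppr_eq0 i3 z3 mulr0.
Qed.

Implicit Types (c d w : {set V} -> int).

Definition flux c r := \sum_(f in facets r) c f * incid f r.

(* Only interior ridges, those in at least two facets, are constrained: the others
   lie in the boundary. *)
Definition consistent s c := forall r, r \in S -> s \subset r -> #|r| = N.-1 ->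
  (1 < #|facets r|)%N -> flux c r = 0.

Definition orientation s w :=
  (forall f, f \in facets s -> w f * w f = 1) /\ consistent s w.

Definition star_orientable s := exists2 w, orientation s w &
  forall c, consistent s c -> exists m : int, forall f, f \in facets s -> c f = m * w f.

Definition link_orientable s := forall v, v \notin s -> v |: s \in S ->
  star_orientable (v |: s).

Lemma consistent_mono s t c : s \subset t -> consistent s c -> consistent t c.
Proof. by move=> st H r rS tr; apply: H => //; apply: subset_trans tr. Qed.

Lemma flux_bdry (x : chain V) r :
  (forall f, x f != 0 -> f \in S /\ #|f| = N) -> flux x r = bdry x r.
Proof.
move=> H; rewrite /bdry ffunE /flux.
rewrite [RHS](bigID (fun T => T \in facets r)) /= [X in _ = _ + X]big1 ?addr0 //.
move=> T TnF.
case: (eqVneq (x T) 0) => [->|xT]; first by rewrite mul0r.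
case: (eqVneq (incid T r) 0) => [->|iT]; first by rewrite mulr0.
have [TS cT] := H T xT; have [sub _] := incid_neq0_cover iT.
by rewrite in_facets TS cT eqxx sub in TnF.
Qed.

Lemma flux_facets2 c r f1 f2 : facets r = [set f1; f2] -> f1 != f2 ->
  flux c r = c f1 * incid f1 r + c f2 * incid f2 r.
Proof. by move=> E ne; rewrite /flux E big_setU1 ?big_set1 ?inE. Qed.

Lemma consistent_ridge r c : r \in S -> #|r| = N.-1 ->
  consistent r c <-> ((1 < #|facets r|)%N -> flux c r = 0).
Proof.
move=> rS cr; split=> [H|H r' r'S rr' cr']; first exact: H.
suff -> : r' = r by [].
by apply/eqP; rewrite eq_sym eqEcard rr' cr' cr leqnn.
Qed.

Lemma ridge_Hzero r : r \in S -> #|r| = N.-1 -> (#|facets r| <= 1)%N -> Hzero S (cost S r) N.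
Proof.
move=> rS cr le c [csup ccyc]; apply: rbound_eq0 => x.
have cF y : c y != 0 -> y \in facets r.
  by case/(supported_cost csup) => yS ry cy; rewrite in_facets yS cy ry eqxx.
case: (set_0Vmem (facets r)) => [E|[f fF]].
  by apply/eqP; apply: contraT => /cF; rewrite E inE.
have one g : g \in facets r -> g = f by move=> gF; move/card_le1_eqP: le => /(_ g f gF fF).
have : flux c r = 0.
  rewrite flux_bdry ?ccyc ?notin_cost //.
  by move=> T /(supported_cost csup) [TS _ cT].
have fr : facets r = [set f] by apply/setP => g; rewrite in_set1; apply/idP/eqP => [/one|->].
rewrite /flux fr big_set1 => /eqP; rewrite mulf_eq0 => /orP[/eqP cf0|/eqP i0]; last first.
  by have := incid_facet_ridge_sqr cr fF; rewrite i0 mul0r.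
by apply/eqP; apply: contraT => /[dup] /cF /one ->; rewrite cf0 eqxx.
Qed.

Lemma star_orientable_mul_const t c d f g : star_orientable t ->
  consistent t c -> consistent t d -> f \in facets t -> g \in facets t ->
  c f * d f = c g * d g.
Proof.
case=> w [wpm _] wall cc cd.
have [mc Hc] := wall c cc; have [md Hd] := wall d cd.
have E h : h \in facets t -> c h * d h = mc * md.
  by move=> hF; rewrite (Hc h hF) (Hd h hF) mulrACA (wpm h hF) mulr1.
by move=> fF gF; rewrite !E.
Qed.

(* A function on link vertices that is constant along link edges is a 0-cocycle of
   the link, by the diamond property. *)
Lemma link_cochain_bdry s (g : V -> int) (d : chain V) :
  supported S (cost S s) #|s|.+2 d ->
  (forall a b, a \notin s -> b \notin s -> a != b -> a |: (b |: s) \in S -> g a = g b) ->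
  \sum_(v | v \notin s) g v * bdry d (v |: s) * incid (v |: s) s = 0.
Proof.
move=> dsup Hg.
rewrite (eq_bigr (fun v => \sum_x d x * (g v * incid x (v |: s) * incid (v |: s) s)));
  last by move=> v _; rewrite /bdry ffunE [g v * _]mulr_sumr mulr_suml;
          apply: eq_bigr => x _; ring.
rewrite exchange_big /= big1 // => x _.
rewrite -mulr_sumr; case: (eqVneq (d x) 0) => [->|dx]; first by rewrite mul0r.
have [xS sx cx] := supported_cost dsup dx.
have [a [b [as_ bs ab xE]]] := cover2_setU2 sx cx.
rewrite (bigD1 a) // (bigD1 b) /=; last by rewrite bs eq_sym.
rewrite big1 ?addr0; last first.
  move=> v /andP[/andP[vs va] vb].
  case: (eqVneq (incid x (v |: s)) 0) => [->|ix]; first by rewrite mulr0 mul0r.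
  have [sub _] := incid_neq0_cover ix.
  have : v \in x by apply: (subsetP sub); rewrite setU11.
  by rewrite xE !inE (negbTE va) (negbTE vb) (negbTE vs).
have gE : g a = g b by apply: Hg => //; rewrite -xE.
by rewrite gE xE -!mulrA -mulrDr incid_diamond // !mulr0.
Qed.

Section Acyclic.
Hypothesis Hloc : forall s, s \in S -> forall k, k != N -> Hzero S (cost S s) k.

Lemma exists_coface s : s \in S -> (#|s| < N)%N -> exists2 v, v \notin s & v |: s \in S.
Proof.
move=> sS ltN.
have [_ [d [dsup dE]]] := Hloc sS (negbT (ltn_eqF ltN)) (unit_chain_rcycle sS).
have := dE s sS (notin_cost (subxx s)).
rewrite ffunE eqxx /bdry ffunE => /esym d1.
have : \sum_x d x * incid x s != 0 by rewrite d1.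
case/(@sum_neq0 _ predT) => x _; rewrite mulf_eq0 negb_or => /andP[dx ix].
have [v vx sx] := incid_neq0 ix.
exists v; first by rewrite sx !inE eqxx.
by rewrite sx setD1K //; case/and3P: (dsup x dx).
Qed.

Lemma exists_facet s : s \in S -> exists f, f \in facets s.
Proof.
move=> sS; have ss : (s \in S) && (s \subset s) by rewrite sS subxx.
have [f /andP[fS sf] fmax] :=
  @arg_maxnP _ s [pred f | (f \in S) && (s \subset f)] (fun f => #|f|) ss.
exists f; rewrite in_facets fS sf eqn_leq card_le_dim //= andbT leqNgt.
apply/negP => /(exists_coface fS)[v vf vS].
have /= := fmax _ (introT andP (conj vS (subset_trans sf (subsetUr _ _)))).
by rewrite cardsU1 vf add1n ltnn.
Qed.

Lemma link_constant s (g : V -> int) : s \in S -> #|s|.+1 != N ->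
  (forall a b, a \notin s -> b \notin s -> a != b -> a |: (b |: s) \in S -> g a = g b) ->
  forall a b, a \notin s -> b \notin s -> a |: s \in S -> b |: s \in S -> g a = g b.
Proof.
move=> sS kN Hg a b as_ bs aS bS.
case: (eqVneq a b) => [->//|ab].
have sU v : s \subset v |: s by apply: subsetUr.
have cU v : v \notin s -> #|v |: s| = #|s|.+1 by move=> vs; rewrite cardsU1 vs.
set c := dipole s (a |: s) (b |: s).
have [_ [d [dsup dE]]] := Hloc sS kN (dipole_rcycle aS bS (sU a) (sU b) (cU a as_) (cU b bs)).
have cE v : v \notin s -> c (v |: s) = bdry d (v |: s).
  move=> vs; case: (boolP (v |: s \in S)) => vS; first by apply: dE => //; apply: notin_cost.
  rewrite (bdry_notin _ vS); last by move=> x /dsup/and3P[].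
  have [va vb] : v != a /\ v != b by split; apply: contraNneq vS => ->.
  by rewrite ffunE !setU1_eq // (negbTE va) (negbTE vb) !mul0r subrr.
have := link_cochain_bdry dsup Hg.
rewrite (eq_bigr (fun v => g v * c (v |: s) * incid (v |: s) s)); last first.
  by move=> v vs; rewrite cE.
rewrite (bigD1 a) //= (bigD1 b) /=; last by rewrite bs eq_sym.
rewrite big1 ?addr0; last first.
  move=> v /andP[/andP[vs va] vb]; rewrite ffunE !setU1_eq //.
  by rewrite (negbTE va) (negbTE vb) !mul0r subrr mulr0 mul0r.
rewrite !ffunE !setU1_eq // eqxx (negbTE ab) eq_sym (negbTE ab) eqxx /=.
rewrite mul1r !mul0r subr0 sub0r mul1r -!mulrA mulNr !incid_cover_sqr ?cU //.
by rewrite mulr1 mulrN1 => /eqP; rewrite subr_eq0 => /eqP.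
Qed.

Lemma consistent_mul_const s c d f g : s \in S -> (#|s|.+2 <= N)%N -> link_orientable s ->
  consistent s c -> consistent s d -> f \in facets s -> g \in facets s ->
  c f * d f = c g * d g.
Proof.
move=> sS le lo cc cd.
pose G v := c (odflt set0 [pick f in facets (v |: s)]) * d (odflt set0 [pick f in facets (v |: s)]).
have GE v h : v \notin s -> h \in facets (v |: s) -> c h * d h = G v.
  move=> vs hF; rewrite /G; case: pickP => [h' h'F|/(_ h)]; last by rewrite hF.
  by apply: (star_orientable_mul_const (lo v vs (facets_face hF))) => //;
    apply: consistent_mono (subsetUr _ _) _.
have Gc a b : a \notin s -> b \notin s -> a |: s \in S -> b |: s \in S -> G a = G b.
  apply: link_constant => //; first by rewrite neq_ltn ltnS le.
  move=> {}a {}b as_ bs _ /exists_facet [h hF].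
  have ha : h \in facets (a |: s) by apply: facets_mono hF; apply/setUS/subsetUr.
  have hb : h \in facets (b |: s) by apply: facets_mono hF; apply: subsetUr.
  by rewrite -(GE a h) // (GE b h).
have lt : (#|s| < N)%N by apply: leq_trans le.
move=> fF gF.
have [v vs vF] := exists_link_facet fF lt; have [u us uF] := exists_link_facet gF lt.
by rewrite (GE v f) // (GE u g) // (Gc v u) // ?(facets_face vF) ?(facets_face uF).
Qed.

Lemma star_orientable_of_orientation s w : s \in S -> (#|s|.+2 <= N)%N ->
  link_orientable s -> orientation s w -> star_orientable s.
Proof.
move=> sS le lo [wpm cw]; exists w => // c cc.
have [f0 f0F] := exists_facet sS.
exists (c f0 * w f0) => f fF.
by rewrite -(consistent_mul_const sS le lo cc cw fF f0F) -mulrA wpm // mulr1.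
Qed.

Lemma star_orientable_of_nonvanishing s u : s \in S -> (#|s|.+2 <= N)%N ->
  link_orientable s -> consistent s u -> (forall f, f \in facets s -> u f != 0) ->
  star_orientable s.
Proof.
move=> sS le lo cu u0.
have [f0 f0F] := exists_facet sS.
pose w f : int := if u f == u f0 then 1 else -1.
have uw f : f \in facets s -> u f = w f * u f0.
  move=> fF; rewrite /w; case: (eqVneq (u f) (u f0)) => [->|ne]; first by rewrite mul1r.
  have := eqf_sqr (u f) (u f0).
  rewrite !expr2 (consistent_mul_const sS le lo cu cu fF f0F) eqxx (negbTE ne).
  by move/esym/eqP ->; rewrite mulN1r.
apply: (@star_orientable_of_orientation s w) => //; split.
  by move=> f _; rewrite /w; case: (_ == _); rewrite ?mulr1 ?mulrNN ?mulr1.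
move=> r rS sr cr lt.
have : flux u r = u f0 * flux w r.
  rewrite /flux mulr_sumr; apply: eq_bigr => f fF; rewrite uw ?(facets_mono sr fF) //.
  by rewrite mulrCA mulrA.
by rewrite cu // => /esym/eqP; rewrite mulf_eq0 (negbTE (u0 _ f0F)) => /eqP.
Qed.

Section LinkGluing.
Variable s : {set V}.
Hypotheses (sS : s \in S) (s_codim3 : (#|s|.+3 <= N)%N).
Hypothesis orientable_above : forall t, t \in S -> s \proper t -> star_orientable t.
Variable o : V -> {set V} -> int.
Hypothesis o_orientation : forall v, v \notin s -> v |: s \in S -> orientation (v |: s) (o v).

Lemma o_sqr v f : v \notin s -> f \in facets (v |: s) -> o v f * o v f = 1.
Proof. by move=> vs fF; apply: (o_orientation vs (facets_face fF)).1. Qed.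

(* On a link edge e = a |: (b |: s), edge_bit e records whether the orientations
   o a and o b of the two link vertices disagree on the star of e. *)
Definition edge_bit e : 'Z_2 :=
  \sum_(u in e :\: s) sign_bit (o u (odflt set0 [pick f in facets e])).

Lemma edge_bitE a b f : a \notin s -> b \notin s -> a != b ->
  f \in facets (a |: (b |: s)) -> edge_bit (a |: (b |: s)) = sign_bit (o a f) + sign_bit (o b f).
Proof.
move=> as_ bs ab fF; set e := a |: (b |: s) in fF *.
have ae : a |: s \subset e by apply/setUS/subsetUr.
have be : b |: s \subset e by apply: subsetUr.
have eQ : star_orientable e.
  apply: orientable_above (facets_face fF) (proper_sub_trans (proper_setU1 bs) _).
  exact: subsetUr.
rewrite /edge_bit setU2_diff // big_setU1 ?big_set1 ?inE //=.
case: pickP => [g gF|/(_ f)]; last by rewrite fF.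
have o_cons v : v \notin s -> v |: s \subset e -> consistent e (o v).
  by move=> vs ve; apply: consistent_mono ve (o_orientation vs (HS (facets_face fF) ve)).2.
rewrite /= -!sign_bitM ?o_sqr // ?(facets_mono ae) ?(facets_mono be) //.
by congr sign_bit; apply: (star_orientable_mul_const eQ) => //; apply: o_cons.
Qed.

Lemma edge_bit_cocycle T : T \in S -> s \subset T -> #|T| = #|s|.+3 ->
  \sum_(v in T :\: s) edge_bit (T :\ v) = 0.
Proof.
move=> TS sT cT; have [fT fTF] := exists_facet TS.
have cTs : #|T :\: s| = 3 by rewrite cardsD (setIidPr sT) cT -addn3 addKn.
rewrite (eq_bigr (fun v => \sum_(u in (T :\: s) :\ v) sign_bit (o u fT))).
  by rewrite sum_off_diagonal cTs Z2_mulrn2.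
move=> v; rewrite inE => /andP[vs vT].
have sTv : s \subset T :\ v by rewrite subsetD1 sT vs.
have cTv : #|T :\ v| = #|s|.+2 by move: cT; rewrite (cardsD1 v T) vT => -[].
have [a [b [as_ bs ab TvE]]] := cover2_setU2 sTv cTv.
have fTv : fT \in facets (T :\ v) by apply: facets_mono fTF; apply: subD1set.
rewrite TvE (edge_bitE (f := fT) as_ bs ab); last by rewrite -TvE.
rewrite setDDl setUC -setDDl TvE setU2_diff //.
by rewrite big_setU1 ?big_set1 //= inE.
Qed.

Definition link_edges := [set e in S | (s \subset e) && (#|e| == #|s|.+2)].

Definition edge_pairing (z : chain V) : 'Z_2 :=
  \sum_(e in link_edges) (z e)%:~R * edge_bit e.

Lemma edge_pairing_incid T : T \in S -> s \subset T -> #|T| = #|s|.+3 ->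
  \sum_(e in link_edges) (incid T e)%:~R * edge_bit e = \sum_(v in T :\: s) edge_bit (T :\ v).
Proof.
move=> TS sT cT.
rewrite (eq_bigr (fun e => \sum_(v in T | e == T :\ v) edge_bit e)); last first.
  by move=> e _; rewrite incid_mod2 big_distrl /=; apply: eq_bigr => v _; rewrite mul1r.
rewrite (exchange_big_dep (mem T)) /=; last by move=> e v _ /andP[].
rewrite [LHS]big_mkcond [RHS]big_mkcond; apply: eq_bigr => v _; rewrite inE.
case: (boolP (v \in T)) => vT; last by rewrite andbF.
have Tv_edge : (T :\ v \in link_edges) = (v \notin s).
  rewrite inE subsetD1 sT (HS TS (subD1set T v)) /=.
  have -> : #|T :\ v| = #|s|.+2 by move: cT; rewrite (cardsD1 v T) vT => -[].
  by rewrite eqxx andbT.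
rewrite andbT /=; case: (boolP (v \in s)) => vs /=.
  by rewrite big_pred0 // => e; apply/andP => -[eE /eqP eTv]; rewrite eTv Tv_edge vs in eE.
rewrite (bigD1 (T :\ v)) ?Tv_edge ?vs ?eqxx //= big_pred0 ?addr0 // => e.
by case: (e == T :\ v); rewrite ?andbF.
Qed.

Lemma edge_pairing_bdry (D z : chain V) : supported S (cost S s) #|s|.+3 D ->
  (forall e, e \in link_edges -> z e = bdry D e) -> edge_pairing z = 0.
Proof.
move=> Dsup zE; rewrite /edge_pairing.
under eq_bigr => e eE do rewrite zE // /bdry ffunE rmorph_sum big_distrl /=.
rewrite exchange_big /=; apply: big1 => T _.
case: (eqVneq (D T) 0) => [->|DT]; first by rewrite big1 // => e _; rewrite mul0r rmorph0 mul0r.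
have [TS sT cT] := supported_cost Dsup DT.
under eq_bigr => e _ do rewrite rmorphM /= -mulrA.
by rewrite -mulr_sumr edge_pairing_incid // edge_bit_cocycle // mulr0.
Qed.

Variable a0 : V.
(* p a is a path in the link from a0 to a, along which vertex_bit integrates edge_bit. *)
Variable p : V -> chain V.
Hypothesis p_bounds : forall a, a \notin s -> a |: s \in S ->
  bounds (cost S s) #|s|.+2 (p a) (dipole s (a |: s) (a0 |: s)).

Definition vertex_bit a := edge_pairing (p a).

(* The loop a0 -> a -> b -> a0 of the link, closed through the edge a b. *)
Lemma edge_loop_rcycle a b : a \notin s -> b \notin s -> a != b -> a |: (b |: s) \in S ->
  rcycle S (cost S s) #|s|.+2 [ffun T => p a T - p b T -
    (incid (a |: s) s * incid (a |: (b |: s)) (a |: s)) * (T == a |: (b |: s))%:Z].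
Proof.
move=> as_ bs ab eS; set e := a |: (b |: s) in eS *; set q := [ffun T => _].
have ae : a |: s \subset e by apply/setUS/subsetUr.
have be : b |: s \subset e by apply: subsetUr.
have [pas pae] := p_bounds as_ (HS eS ae); have [pbs pbe] := p_bounds bs (HS eS be).
have se : s \subset e by apply: subset_trans (subsetUr _ _) be.
have ce : #|e| = #|s|.+2 by rewrite /e cardsU1 !inE negb_or as_ ab cardsU1 bs.
split=> [T|t tS tc].
  rewrite ffunE; case: (eqVneq T e) => [-> _|ne nz]; first by rewrite eS notin_cost // ce /=.
  case: (eqVneq (p a T) 0) => [paT|paT]; last exact: pas.
  apply: pbs; apply: contraNneq nz => pbT.
  by rewrite paT pbT subrr mulr0 subr0.
have st : s \subset t by move: tc; rewrite in_cost tS negbK.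
have -> : bdry q t = bdry (p a) t - bdry (p b) t -
    incid (a |: s) s * incid e (a |: s) * incid e t.
  rewrite /bdry !ffunE -sumrB.
  rewrite -(sum_indicator e (fun T => incid (a |: s) s * incid e (a |: s) * incid T t)) -sumrB.
  by apply: eq_bigr => T _; rewrite ffunE; ring.
rewrite -pae // -pbe // !ffunE.
have cU v : v \notin s -> #|v |: s| = #|s|.+1 by move=> vs; rewrite cardsU1 vs.
have isq_e v : v \notin s -> v |: s \subset e -> incid e (v |: s) * incid e (v |: s) = 1.
  by move=> vs ve; apply: incid_cover_sqr ve _; rewrite ce cU.
have [ta|ta] := eqVneq t (a |: s).
  by rewrite ta (setU1_eq as_ bs) (negbTE ab) -mulrA isq_e //= mulr1; ring.
have [tb|tb] := eqVneq t (b |: s).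
  have -> : incid (a |: s) s * incid e (a |: s) = - (incid e (b |: s) * incid (b |: s) s).
    by rewrite mulrC; apply/eqP; rewrite -addr_eq0 incid_diamond.
  by rewrite tb mulNr mulrAC isq_e //= mul1r; ring.
have -> : incid e t = 0.
  apply/eqP; apply: contraT => /(incid_setU2_neq0 as_ bs ab st).
  by case=> E; [move/eqP: ta | move/eqP: tb].
by rewrite /=; ring.
Qed.

Lemma vertex_bit_edge a b : a \notin s -> b \notin s -> a != b -> a |: (b |: s) \in S ->
  vertex_bit a + vertex_bit b = edge_bit (a |: (b |: s)).
Proof.
move=> as_ bs ab eS; set e := a |: (b |: s) in eS *.
have cN : #|s|.+2 != N by rewrite ltn_eqF.
have [_ [D [Dsup DE]]] := Hloc sS cN (edge_loop_rcycle as_ bs ab eS).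
set q := [ffun T => _] in DE.
have se : s \subset e by apply: subset_trans (subsetUr _ _) (subsetUr _ _).
have ce : #|e| = #|s|.+2 by rewrite /e cardsU1 !inE negb_or as_ ab cardsU1 bs.
have eE : e \in link_edges by rewrite inE eS se ce eqxx.
have q0 : edge_pairing q = 0.
  apply: edge_pairing_bdry Dsup _ => e'; rewrite inE => /and3P[e'S se' _].
  by apply: DE => //; apply: notin_cost.
have kappa : ((incid (a |: s) s * incid e (a |: s))%:~R : 'Z_2) = 1.
  apply: Z2_sqr1; rewrite mulrACA incid_cover_sqr ?subsetUr ?cardsU1 ?as_ // mul1r.
  by apply: incid_cover_sqr; [apply/setUS/subsetUr | rewrite ce cardsU1 as_].
have : edge_pairing q = vertex_bit a - vertex_bit b - edge_bit e.
  rewrite /vertex_bit /edge_pairing -sumrB -(sum_indicator_in edge_bit eE) -sumrB.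
  apply: eq_bigr => e' _; rewrite ffunE !rmorphB /= rmorphM /= kappa mul1r.
  by case: (e' == e); rewrite /= ?mulr1z ?mulr0z !mulrBl.
by rewrite q0 !Z2_oppr => /esym/eqP; rewrite addr_eq0 Z2_oppr => /eqP.
Qed.

Lemma facet_link_vertex v f : f \in facets s -> v \in f :\: s ->
  [/\ v \notin s, v |: s \in S & f \in facets (v |: s)].
Proof.
move=> fF; rewrite inE => /andP[vs vf].
have vsf : v |: s \subset f by rewrite subUset sub1set vf (facets_sub fF).
by rewrite vs (HS (facets_in fF) vsf) in_facets (facets_in fF) (facets_card fF) eqxx vsf.
Qed.

Lemma vertex_bit_sign_indep f a b : f \in facets s -> a \in f :\: s -> b \in f :\: s ->
  bit_sign (vertex_bit a) * o a f = bit_sign (vertex_bit b) * o b f.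
Proof.
move=> fF af bf; case: (eqVneq a b) => [->//|ab].
have [as_ _ afF] := facet_link_vertex fF af; have [bs _ bfF] := facet_link_vertex fF bf.
have ef : a |: (b |: s) \subset f.
  rewrite !subUset !sub1set (facets_sub fF) (subsetP (facets_sub afF)) ?setU11 //.
  by rewrite (subsetP (facets_sub bfF)) ?setU11.
have feF : f \in facets (a |: (b |: s)).
  by rewrite in_facets (facets_in fF) (facets_card fF) eqxx ef.
apply: signs_transpose; rewrite ?bit_sign_sqr ?o_sqr //.
rewrite -bit_signD vertex_bit_edge ?(HS (facets_in fF) ef) // (edge_bitE as_ bs ab feF).
by rewrite bit_signD !sign_bitK ?o_sqr.
Qed.

Definition glued_orientation f :=
  let v := odflt a0 [pick v in f :\: s] in bit_sign (vertex_bit v) * o v f.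

Lemma glued_star_orientable : star_orientable s.
Proof.
have lo : link_orientable s by move=> v vs vS; apply: orientable_above vS (proper_setU1 vs).
have vfP f : f \in facets s -> odflt a0 [pick v in f :\: s] \in f :\: s.
  have lt : (#|s| < N)%N := ltnW (ltnW s_codim3).
  move=> fF; have [v vs vF] := exists_link_facet fF lt.
  case: pickP => [u -> //|/(_ v)] /=.
  by rewrite inE vs (subsetP (facets_sub vF)) ?setU11.
apply: (@star_orientable_of_orientation s glued_orientation) => //; first exact: ltnW.
split=> [f fF|r rS sr cr ltr].
  rewrite /glued_orientation mulrACA bit_sign_sqr mul1r.
  by have [vs _ vF] := facet_link_vertex fF (vfP f fF); apply: o_sqr.
have : (0 < #|r :\: s|)%N.
  by rewrite cardsD (setIidPr sr) cr subn_gt0; move: s_codim3; clear; lia.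
case/card_gt0P => v vr; have [vs vr'] : v \notin s /\ v \in r by move: vr; rewrite inE => /andP[].
have vrs : v |: s \subset r by rewrite subUset sub1set vr' sr.
have -> : flux glued_orientation r = bit_sign (vertex_bit v) * flux (o v) r.
  rewrite /flux mulr_sumr; apply: eq_bigr => f fF.
  have fFs : f \in facets s := facets_mono sr fF.
  have vf : v \in f :\: s by rewrite inE vs (subsetP (facets_sub fF)).
  by rewrite /glued_orientation (vertex_bit_sign_indep fFs (vfP f fFs) vf) mulrA.
by rewrite ((o_orientation vs (HS rS vrs)).2 r rS vrs cr ltr) mulr0.
Qed.

End LinkGluing.

Lemma codim3_star_orientable s : s \in S -> (#|s|.+3 <= N)%N ->
  (forall t, t \in S -> s \proper t -> star_orientable t) -> star_orientable s.
Proof.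
move=> sS le above.
have [o oP] : exists o : V -> {set V} -> int,
    forall v, v \notin s /\ v |: s \in S -> orientation (v |: s) (o v).
  apply: (fin_choice_on (fun _ => 0) (D := fun v => v \notin s /\ v |: s \in S)
                        (P := fun v w => orientation (v |: s) w)) => v [vs vS].
  by have [w ow _] := above _ vS (proper_setU1 vs); exists w.
have [a0 a0s a0S] := exists_coface sS (ltnW (ltnW le)).
have [p pP] : exists p : V -> chain V, forall a, a \notin s /\ a |: s \in S ->
    bounds (cost S s) #|s|.+2 (p a) (dipole s (a |: s) (a0 |: s)).
  apply: (fin_choice_on [ffun _ => 0] (D := fun a => a \notin s /\ a |: s \in S)
    (P := fun a pa => bounds (cost S s) #|s|.+2 pa (dipole s (a |: s) (a0 |: s)))) => a [as_ aS].
  have cU v : v \notin s -> #|v |: s| = #|s|.+1 by move=> vs; rewrite cardsU1 vs.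
  have [_ [d dc]] := Hloc sS (negbT (ltn_eqF (ltnW le)))
    (dipole_rcycle aS a0S (subsetUr _ _) (subsetUr _ _) (cU a as_) (cU a0 a0s)).
  by exists d.
apply: (glued_star_orientable sS le above (o := o) _ (p := p)) => v vs vS.
  exact: oP.
exact: pP.
Qed.

Section Pseudomanifold.
Hypothesis Hridge : forall r, r \in S -> #|r| = N.-1 -> (#|facets r| <= 2)%N.

Lemma facet_star_orientable s : s \in S -> #|s| = N -> star_orientable s.
Proof.
move=> sS cs.
have Fs1 f : f \in facets s -> f = s.
  by move=> fF; apply/eqP; rewrite eq_sym eqEcard (facets_sub fF) (facets_card fF) cs leqnn.
exists (fun _ => 1); first split=> [f _|r rS sr cr]; first by rewrite mulr1.
  by have := subset_leq_card sr; rewrite cr cs; move: HN; lia.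
by move=> c _; exists (c s) => f /Fs1 ->; rewrite mulr1.
Qed.

Lemma ridge_star_orientable r : r \in S -> #|r| = N.-1 -> star_orientable r.
Proof.
move=> rS cr; have ipm := incid_facet_ridge_sqr cr.
have := Hridge rS cr; rewrite leq_eqVlt ltnS => /orP[two|le1]; last first.
  exists (fun _ => 1); first split=> [f _|]; first by rewrite mulr1.
    by apply/consistent_ridge => // lt; rewrite ltnNge le1 in lt.
  move=> c _; case: (set_0Vmem (facets r)) => [E | [f0 f0F]].
    by exists 0 => f; rewrite E inE.
  exists (c f0) => f fF; rewrite mulr1.
  by move/card_le1_eqP: le1 => /(_ f f0 fF f0F) ->.
case/cards2P: two => f1 [f2 [ne E]].
have f1F : f1 \in facets r by rewrite E !inE eqxx.
have f2F : f2 \in facets r by rewrite E !inE eqxx orbT.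
have i11 := ipm _ f1F; have i22 := ipm _ f2F.
set i1 := incid f1 r in i11 *; set i2 := incid f2 r in i22 *.
have n21 : (f2 == f1) = false by apply/negbTE; rewrite eq_sym.
exists (fun f => if f == f1 then 1 else - (i1 * i2)).
  split=> [f|].
    rewrite E !inE => /orP[]/eqP ->; rewrite ?eqxx ?mulr1 // n21.
    by rewrite mulrNN mulrACA i11 i22 mulr1.
  apply/consistent_ridge => // _; rewrite (flux_facets2 _ E ne) eqxx n21 -/i1 -/i2.
  by rewrite mul1r mulNr -mulrA i22 mulr1 subrr.
move=> c /(consistent_ridge _ rS cr) H.
exists (c f1) => f; rewrite E !inE => /orP[]/eqP->; first by rewrite eqxx mulr1.
have := H; rewrite E cards2 ne => /(_ isT).
rewrite (flux_facets2 _ E ne) -/i1 -/i2 n21 => /eqP; rewrite addr_eq0 => /eqP h.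
by rewrite mulrN mulrA h mulNr opprK -mulrA i22 mulr1.
Qed.

Definition ridges s := [set r in S | (s \subset r) && (#|r| == N.-1)].


Lemma in_ridges s r : (r \in ridges s) = [&& r \in S, s \subset r & #|r| == N.-1].
Proof. by rewrite inE. Qed.

Lemma sum_flux_ridges s c : s \in S -> #|s|.+2 = N ->
  \sum_(r in ridges s) flux c r * incid r s = 0.
Proof.
move=> sS cs.
transitivity (\sum_(r in ridges s) \sum_(f in facets s)
                 (r \subset f)%:Z * (c f * incid f r * incid r s)).
  apply: eq_bigr => r; rewrite in_ridges => /and3P[rS sr _].
  rewrite /flux big_distrl /= big_mkcond [RHS]big_mkcond /=.
  apply: eq_bigr => f _; rewrite !in_facets.
  case: (boolP (r \subset f)) => rf; last by rewrite !andbF mul0r; case: (_ && _).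
  by rewrite (subset_trans sr rf) !andbT mul1r.
rewrite exchange_big /=; apply: big1 => f fF.
have cf : #|f| = (#|s|).+2 by rewrite (facets_card fF) cs.
have [a [b [as_ bs ab fE]]] := cover2_setU2 (facets_sub fF) cf.
have af : a |: s \subset f by rewrite fE; apply/setUS/subsetUr.
have bf : b |: s \subset f by rewrite fE; apply: subsetUr.
have vR v : v \notin s -> v |: s \subset f -> v |: s \in ridges s.
  move=> vs vf; rewrite in_ridges subsetUr cardsU1 vs -cs eqxx (HS (facets_in fF) vf).
  by [].
rewrite (bigD1 (a |: s)) ?vR // (bigD1 (b |: s)) /=; last by rewrite vR // setU1_eq // eq_sym.
rewrite big1 ?addr0; last first.
  move=> r /andP[/andP[rR ra] rb].
  case: (boolP (r \subset f)) => rf; last by rewrite mul0r.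
  move: rR; rewrite in_ridges => /and3P[_ sr /eqP cr].
  have [x xs rE] := cover_setU1 sr (etrans cr (esym (f_equal predn cs))).
  have : x \in f by apply: (subsetP rf); rewrite rE setU11.
  rewrite fE !inE => /or3P[/eqP xE|/eqP xE|xs']; last by rewrite xs' in xs.
  - by rewrite rE xE eqxx in ra.
  - by rewrite rE xE eqxx in rb.
by rewrite af bf !mul1r -!mulrA -mulrDr fE incid_diamond // mulr0.
Qed.

Section Codim2.
Variable s : {set V}.
Hypotheses (sS : s \in S) (s_codim2 : #|s|.+2 = N).

Definition facets_indicator f : int := (f \in facets s)%:Z.

Lemma flux_indicator_dvd2 r : r \in ridges s -> (1 < #|facets r|)%N ->
  (2 %| flux facets_indicator r)%Z.
Proof.
rewrite in_ridges => /and3P[rS sr /eqP cr] lt.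
have := Hridge rS cr; rewrite leq_eqVlt ltnS leqNgt lt orbF.
case/cards2P => f1 [f2 [ne E]].
have f1F : f1 \in facets r by rewrite E !inE eqxx.
have f2F : f2 \in facets r by rewrite E !inE eqxx orbT.
rewrite (flux_facets2 _ E ne) /facets_indicator !(facets_mono sr) // !mul1r.
move: (incid_facet_ridge_sqr cr f1F) (incid_facet_ridge_sqr cr f2F).
by move=> /sqr1_cases[]-> /sqr1_cases[]->.
Qed.

(* The witness is half the flux of the indicator, corrected on one boundary ridge if
   there is one; otherwise sum_flux_ridges makes its boundary vanish. *)
Lemma exists_half_flux : exists y : chain V,
  [/\ forall r, y r != 0 -> r \in ridges s,
      forall r, r \in ridges s -> (1 < #|facets r|)%N -> y r * 2 = flux facets_indicator r
    & \sum_(r in ridges s) y r * incid r s = 0].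
Proof.
have isq r : r \in ridges s -> incid r s * incid r s = 1.
  by rewrite in_ridges => /and3P[_ sr /eqP cr]; apply: incid_cover_sqr; rewrite // cr -s_codim2.
pose half r := (flux facets_indicator r %/ 2)%Z.
have halfK r : r \in ridges s -> (1 < #|facets r|)%N -> half r * 2 = flux facets_indicator r.
  by move=> rR lt; apply: divzK; apply: flux_indicator_dvd2.
set sum0 := \sum_(r in ridges s) half r * incid r s.
case: (pickP [pred r | (r \in ridges s) && (#|facets r| <= 1)%N]) => [r1 /andP[r1R r1le] | none].
  exists [ffun r => if r \in ridges s then
                    (if r == r1 then half r - sum0 * incid r1 s else half r) else 0].
  split=> [r|r rR lt|].
  - by rewrite ffunE; case: (r \in ridges s); rewrite ?eqxx.
  - rewrite ffunE rR ifN ?halfK //.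
    by apply: contraTneq lt => ->; rewrite -leqNgt.
  rewrite (eq_bigr (fun r => half r * incid r s - (r == r1)%:Z * (sum0 * incid r1 s * incid r s)));
    last by move=> r rR; rewrite ffunE rR; case: (r == r1); rewrite ?mulrBl ?mul0r ?subr0 ?mul1r.
  rewrite sumrB -/sum0 (bigD1 r1) //= eqxx mul1r big1 => [|r /andP[_ /negbTE ->]];
    last by rewrite mul0r.
  by rewrite addr0 -mulrA isq // mulr1 subrr.
have lt r : r \in ridges s -> (1 < #|facets r|)%N.
  by move=> rR; move: (none r); rewrite /= rR /= ltnNge => ->.
exists [ffun r => if r \in ridges s then half r else 0].
split=> [r|r rR _|].
- by rewrite ffunE; case: (r \in ridges s); rewrite ?eqxx.
- by rewrite ffunE rR halfK ?lt.
have : (\sum_(r in ridges s)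
          [ffun r => if r \in ridges s then half r else 0] r * incid r s) * 2 = 0.
  rewrite mulr_suml -[RHS](sum_flux_ridges facets_indicator sS s_codim2).
  by apply: eq_bigr => r rR; rewrite ffunE rR mulrAC halfK ?lt.
by move/eqP; rewrite mulf_eq0 => /orP[/eqP|].
Qed.

Lemma half_flux_rcycle (y : chain V) : (forall r, y r != 0 -> r \in ridges s) ->
  \sum_(r in ridges s) y r * incid r s = 0 -> rcycle S (cost S s) N.-1 y.
Proof.
move=> yR ysum; split=> [r /yR|t tS].
  by rewrite in_ridges => /and3P[rS sr cr]; rewrite rS notin_cost.
rewrite in_cost tS negbK /= => st; rewrite /bdry ffunE.
rewrite (bigID (fun r => r \in ridges s)) /= [X in _ + X]big1 => [|r rR]; last first.
  by case: (eqVneq (y r) 0) => [->|/yR]; [rewrite mul0r | rewrite (negbTE rR)].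
case: (eqVneq t s) => [->|ts]; first by rewrite ysum addr0.
rewrite addr0 big1 // => r; rewrite in_ridges => /and3P[_ _ /eqP cr].
case: (eqVneq (incid r t) 0) => [->|/incid_neq0_cover[_ ct]]; first by rewrite mulr0.
case/negP: ts; rewrite eq_sym eqEcard st ct cr -s_codim2 leqnn.
by [].
Qed.

(* Correcting the indicator by twice a chain bounding the half flux keeps every
   coefficient odd and makes it consistent. *)
Lemma exists_odd_consistent : exists2 u, consistent s u &
  forall f, f \in facets s -> u f != 0.
Proof.
have [y [yR y2 ysum]] := exists_half_flux.
have cN : N.-1 != N by move: HN; lia.
have [_ [x [xsup xE]]] := Hloc sS cN (half_flux_rcycle yR ysum).
have xF f : x f != 0 -> f \in S /\ #|f| = N.
  by case/(supported_cost xsup) => fS _ cf; rewrite cf prednK.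
exists (fun f => facets_indicator f - x f * 2) => [r rS sr cr lt|f fF].
  have rR : r \in ridges s by rewrite in_ridges rS sr cr eqxx.
  have -> : flux (fun f => facets_indicator f - x f * 2) r =
            flux facets_indicator r - flux x r * 2.
    by rewrite /flux mulr_suml -sumrB; apply: eq_bigr => f _; ring.
  by rewrite flux_bdry // -xE ?notin_cost // y2 // subrr.
by rewrite /facets_indicator fF; move: (x f); lia.
Qed.

Lemma codim2_star_orientable : link_orientable s -> star_orientable s.
Proof.
move=> lo; have [u cu u0] := exists_odd_consistent.
by apply: (star_orientable_of_nonvanishing sS _ lo cu u0); rewrite s_codim2.
Qed.

End Codim2.

Lemma all_star_orientable s : s \in S -> star_orientable s.
Proof.
have [n] := ubnP (N - #|s|); elim: n s => // n IH s lt sS.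
have cs := card_le_dim sS.
have above t : t \in S -> s \proper t -> star_orientable t.
  move=> tS st; apply: IH (tS); move: (proper_card st) (card_le_dim tS) lt; lia.
case: (ltngtP #|s|.+2 N) => c.
- exact: codim3_star_orientable.
- case: (eqVneq #|s| N) => [e|ne]; first exact: facet_star_orientable.
  by apply: ridge_star_orientable => //; move: c cs ne; lia.
- by apply: codim2_star_orientable => // v vs vS; apply: above vS (proper_setU1 vs).
Qed.

Lemma set0_in_complex : set0 \in S.
Proof.
case: (set_0Vmem S) => [E|[s sS]]; last exact: HS sS (sub0set s).
by move: HN; rewrite /dimS E big_set0.
Qed.

Definition Bd := [set s | (s \in S) && asbool (Hzero S (cost S s) N)].


Lemma facet_notin_Bd f : f \in facets set0 -> f \notin Bd.
Proof.
move=> fF; rewrite inE (facets_in fF) /=; apply/asboolP.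
exact: facet_not_Hzero (facets_in fF) (facets_card fF).
Qed.

Lemma ridge_in_Bd r : r \in S -> #|r| = N.-1 -> (r \in Bd) = (#|facets r| <= 1)%N.
Proof.
move=> rS cr; rewrite inE rS; apply/asboolP/idP => [H|]; last exact: ridge_Hzero.
rewrite leqNgt; apply/negP => /card_gt1P [f1 [f2 [f1F f2F ne]]].
exact: two_facets_not_Hzero rS cr f1F f2F ne H.
Qed.

Lemma rcycle_Bd_consistent (c : chain V) : rcycle S Bd N c -> consistent set0 c.
Proof.
move=> [csup ccyc] r rS _ cr lt.
rewrite flux_bdry => [|T /csup/and3P[TS _ /eqP //]].
by apply: ccyc; rewrite // ridge_in_Bd // -ltnNge.
Qed.

Definition top_chain w : chain V := [ffun f => if f \in facets set0 then w f else 0].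


Lemma top_chain_rcycle w : consistent set0 w -> rcycle S Bd N (top_chain w).
Proof.
move=> wcons; have top f : top_chain w f != 0 -> f \in facets set0.
  by rewrite ffunE; case: ifP => // _; rewrite eqxx.
split=> [f /top fF|t tS tB]; first by rewrite (facets_in fF) facet_notin_Bd //= (facets_card fF).
rewrite -flux_bdry => [|f /top fF]; last by rewrite (facets_in fF) (facets_card fF).
case: (eqVneq #|t| N.-1) => [ct|ct].
  have lt : (1 < #|facets t|)%N by rewrite ltnNge -ridge_in_Bd.
  rewrite -(wcons t tS (sub0set t) ct lt); apply: eq_bigr => f fF.
  by rewrite ffunE (facets_mono (sub0set t) fF).
apply: big1 => f fF; case: (eqVneq (incid f t) 0) => [->|/incid_neq0_cover[_ cft]].
  by rewrite mulr0.
by move: ct; rewrite cft (facets_card fF) eqxx.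
Qed.

Lemma orientable_of_acyclic_links : orientable_Z S.
Proof.
have [f0 f0F] := exists_facet set0_in_complex.
have [w [wpm wcons] wall] := all_star_orientable set0_in_complex.
exists Bd; split=> [s|]; first by rewrite inE; split=> [/andP[-> /asboolP]|[-> /asboolP]].
exists (top_chain w); split; [exact: top_chain_rcycle | split=> [c cc|m hm]].
  have [m hm] := wall c (rcycle_Bd_consistent cc).
  exists m; apply: rbound_eq0 => x; rewrite !ffunE.
  case: (boolP (x \in facets set0)) => xF; first by rewrite hm // subrr.
  rewrite mulr0 subr0; apply/eqP; apply: contraT => /(proj1 cc) /and3P[xS _ /eqP cx].
  by rewrite in_facets xS cx eqxx sub0set in xF.
have := rbound_dim hm (facets_in f0F) (facet_notin_Bd f0F).
rewrite !ffunE f0F => /eqP; rewrite mulf_eq0 => /orP[/eqP //|/eqP w0].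
by have := wpm _ f0F; rewrite w0 mul0r.
Qed.

End Pseudomanifold.
End Acyclic.
End Complex.

Lemma connect_no_edges (V : finType) (S : {set {set V}}) (u v : V) :
  (forall x, x \in S -> (#|x| <= 1)%N) ->
  connect (fun a b => [set a; b] \in S) u v -> u = v.
Proof.
move=> H /connectP [p pth ->]; elim: p u pth => [//|x p IH] u /= /andP[e pth].
have := H _ e; rewrite cards2 ltnS leqn0 eqb0 negbK => /eqP ->.
exact: IH.
Qed.

Section CMManifold.
Variables (V : finType) (S : {set {set V}}).
Local Notation N := (dimS S).

Lemma CM_dim_gt0 : CM_Z S -> (0 < N)%N.
Proof.
case=> _ [_ [s [sS sn _]]]; apply: leq_trans (card_le_dim sS).
by rewrite card_gt0.
Qed.

Lemma CM_local_acyclic : CM_Z S ->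
  forall s, s \in S -> forall k, k != N -> Hzero S (cost S s) k.
Proof.
move=> [CMloc [CMglob _]] s sS k kN; case: (eqVneq s set0) => [->|sn]; last exact: CMloc.
suff -> : cost S set0 = set0 by apply: CMglob.
by apply/setP => t; rewrite in_cost sub0set andbF inE.
Qed.

Lemma hmanifold_ridge_facets : hmanifold S -> (0 < N)%N ->
  forall r, r \in S -> #|r| = N.-1 -> (#|facets S r| <= 2)%N.
Proof.
move=> [HS hm] HN r rS cr; rewrite leqNgt; apply/negP.
case/card_gt2P => f1 [f2 [f3 [[f1F f2F f3F] [n12 n23 n31]]]].
case: hm => [[a [b [ab SE]]]|SE|[conn [loc _]]].
- have f0 f : f \in facets S r -> f != set0.
    by move=> fF; rewrite -card_gt0 (facets_card fF).
  have fab f : f \in facets S r -> f \in [set [set a]; [set b]].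
    move=> fF; have := facets_in fF; rewrite SE !inE -orbA => /orP[f00|//].
    by move: (f0 _ fF); rewrite f00.
  have := subset_leq_card (introT subsetP fab); rewrite cards2 leqNgt => /negP; apply.
  apply: leq_trans (_ : 2 < _)%N; first by case: (_ != _).
  by apply/card_gt2P; exists f1, f2, f3.
- by move: HN; rewrite /dimS SE big_set1 cards0.
case: (eqVneq r set0) => [r0|rn].
  have N1 : N = 1%N by move: cr HN; rewrite r0 cards0; case: N => [|[]].
  have vertex f : f \in facets S r -> exists u, f = [set u].
    by move=> fF; apply/cards1P; rewrite (facets_card fF) N1.
  have [u1 E1] := vertex _ f1F; have [u2 E2] := vertex _ f2F.
  have le1 x : x \in S -> (#|x| <= 1)%N by rewrite -N1; apply: card_le_dim.
  have := connect_no_edges le1 (conn.2 u1 u2 _ _).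
  rewrite -E1 -E2 (facets_in f1F) (facets_in f2F) => /(_ isT isT) u12.
  by move: n12; rewrite E1 E2 u12 eqxx.
have [_ [Hz|HZ]] := loc r rS rn.
  exact: (two_facets_not_Hzero HN rS cr f1F f2F n12 Hz).
by apply: (three_facets_not_HisZ HN rS cr f1F f2F f3F n12 _ n23 HZ); rewrite eq_sym.
Qed.

End CMManifold.

Theorem theorem14 (V : finType) (S : {set {set V}}) :
  hmanifold S -> CM_Z S -> orientable_Z S.
Proof.
move=> hm CM; have HN := CM_dim_gt0 CM.
exact: orientable_of_acyclic_links hm.1 HN (CM_local_acyclic CM) (hmanifold_ridge_facets hm HN).
Qed.
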